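(* Consider the switched system $x(t+1)=Ax(t)+\sigma(t)Bu(t)$, with output $y(t)=Cx(t)$ if $\sigma(t)=1$ and no output if $\sigma(t)=0$, where $A\in\mathbb{R}^{n\times n}$ is invertible, $B\in\mathbb{R}^{n\times m}$, $C\in\mathbb{R}^{p\times n}$, and the switching signal $\sigma:\mathbb{N}\to\{0,1\}$ ranges over the admissible signals $\mathcal{L}(\mathcal{A})$ of a given automaton $\mathcal{A}$. Suppose this system is observable. Let $\sigma_1,\sigma_2\in\mathcal{L}(\mathcal{A})$ and, for $i=1,2$, let $t_{\sigma_i}$ be the first time instance $t$ at which the observability matrix $O_{\sigma_i(t)}(C,A)$ has full column rank $n$. If $\sigma_1\preceq\sigma_2$, then $t_{\sigma_1}\ge t_{\sigma_2}$.
   Context: An automaton $\mathcal{A}$ is a directed graph whose edges are labeled by $0$ or $1$; a binary sequence $\sigma(0)\sigma(1)\ldots$ is admissible if there is a path in the graph carrying this sequence as the succession of labels on its edges, and $\mathcal{L}(\mathcal{A})$ is the set of admissible sequences. $\sigma(t)=0$ represents a packet dropout and $\sigma(t)=1$ a successful transmission. For a switching signal $\sigma$ and $t\in\mathbb{N}$, the observability matrix is $O_{\sigma(t)}(C,A)=\begin{bmatrix}\sigma(0)C\\ \sigma(1)CA\\ \vdots\\ \sigma(t)CA^t\end{bmatrix}$. The system is observable if for every $\sigma\in\mathcal{L}(\mathcal{A})$ and any initial states $x_0,\tilde x_0$, equality of the outputs $y(t,x_0,\sigma)=y(t,\tilde x_0,\sigma)$ for all $t\in\mathbb{N}$ implies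 $x_0=\tilde x_0$. Partial order: $\sigma_1\preceq\sigma_2$ if for every $i$ with $\sigma_1(i)=1$ we also have $\sigma_2(i)=1$. *)

From mathcomp Require Import all_boot all_order all_algebra.
Set Implicit Arguments. Unset Strict Implicit. Unset Printing Implicit Defensive.
Import Order.TTheory GRing.Theory Num.Theory.
Local Open Scope ring_scope.

Record automaton := Automaton {
  state : finType;
  edge : state -> bool -> state -> bool
}.

Definition admissible (Aut : automaton) (sigma : nat -> bool) : Prop :=
  exists q : nat -> state Aut, forall t, edge (q t) (sigma t) (q t.+1).

Fixpoint traj (R : fieldType) (n m : nat) (A : 'M[R]_n) (B : 'M[R]_(n, m))
  (sigma : nat -> bool) (u : nat -> 'cV[R]_m) (x0 : 'cV[R]_n) (t : nat)
  : 'cV[R]_n :=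
  match t with
  | 0 => x0
  | t'.+1 => A *m traj A B sigma u x0 t' + (sigma t')%:R *: (B *m u t')
  end.

Definition output (R : fieldType) (n m p : nat) (A : 'M[R]_n)
  (B : 'M[R]_(n, m)) (C : 'M[R]_(p, n)) (sigma : nat -> bool)
  (u : nat -> 'cV[R]_m) (x0 : 'cV[R]_n) (t : nat) : option 'cV[R]_p :=
  if sigma t then Some (C *m traj A B sigma u x0 t) else None.

Definition observable (R : fieldType) (n m p : nat) (Aut : automaton)
  (A : 'M[R]_n) (B : 'M[R]_(n, m)) (C : 'M[R]_(p, n)) : Prop :=
  forall sigma, admissible Aut sigma ->
  forall (u : nat -> 'cV[R]_m) (x0 x0' : 'cV[R]_n),
    (forall t, output A B C sigma u x0 t = output A B C sigma u x0' t) ->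
    x0 = x0'.

Fixpoint obsrows (p t : nat) : nat :=
  match t with 0 => p | t'.+1 => obsrows p t' + p end.

Fixpoint obsmx (R : fieldType) (n p : nat) (C : 'M[R]_(p, n)) (A : 'M[R]_n)
  (sigma : nat -> bool) (t : nat) : 'M[R]_(obsrows p t, n) :=
  match t return 'M[R]_(obsrows p t, n) with
  | 0 => (sigma 0)%:R *: C
  | t'.+1 => col_mx (obsmx C A sigma t') ((sigma t'.+1)%:R *: (C *m A ^+ t'.+1))
  end.

Definition first_full_rank (R : fieldType) (n p : nat) (C : 'M[R]_(p, n))
  (A : 'M[R]_n) (sigma : nat -> bool) (t : nat) : Prop :=
  \rank (obsmx C A sigma t) = n /\
  forall t', (t' < t)%N -> \rank (obsmx C A sigma t') <> n.

Definition sig_le (s1 s2 : nat -> bool) : Prop := forall i, s1 i -> s2 i.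

From mathcomp Require Import all_boot all_order all_algebra.
Import GRing.Theory.
Local Open Scope ring_scope.

(* Making more transmissions can only enlarge the row space of the
   observability matrix, hence its rank; so once the rank reaches n for the
   smaller signal it has already reached n for the larger one. *)

Lemma scale_bool_submx (R : fieldType) (k n : nat) (b1 b2 : bool)
    (M : 'M[R]_(k, n)) :
  (b1 -> b2) -> (b1%:R *: M <= b2%:R *: M)%MS.
Proof.
case: b1 => [/(_ isT) -> // | _].
by rewrite scale0r sub0mx.
Qed.

Lemma obsmx_sub (R : fieldType) (n p : nat) (C : 'M[R]_(p, n)) (A : 'M[R]_n)
    (sigma1 sigma2 : nat -> bool) (t : nat) :
  sig_le sigma1 sigma2 -> (obsmx C A sigma1 t <= obsmx C A sigma2 t)%MS.
Proof.
move=> le12; elim: t => [|t IHt] /=; first exact: scale_bool_submx (le12 0%N).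
rewrite -!addsmxE; apply: addsmxS IHt _.
exact: scale_bool_submx (le12 t.+1).
Qed.

Lemma obsmx_full_rank_mono (R : fieldType) (n p : nat) (C : 'M[R]_(p, n))
    (A : 'M[R]_n) (sigma1 sigma2 : nat -> bool) (t : nat) :
  sig_le sigma1 sigma2 -> \rank (obsmx C A sigma1 t) = n ->
  \rank (obsmx C A sigma2 t) = n.
Proof.
move=> le12 full1; apply/eqP; rewrite eqn_leq rank_leq_col /=.
by rewrite -{1}full1 mxrankS // obsmx_sub.
Qed.

Theorem mainTheorem1 (R : realFieldType) (n m p : nat) (Aut : automaton)
  (A : 'M[R]_n) (B : 'M[R]_(n, m)) (C : 'M[R]_(p, n)) :
  A \in unitmx ->
  observable Aut A B C ->
  forall (sigma1 sigma2 : nat -> bool),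
    admissible Aut sigma1 -> admissible Aut sigma2 ->
  forall t1 t2 : nat,
    first_full_rank C A sigma1 t1 -> first_full_rank C A sigma2 t2 ->
    sig_le sigma1 sigma2 ->
    (t2 <= t1)%N.
Proof.
move=> _ _ sigma1 sigma2 _ _ t1 t2 [full1 _] [_ first2] le12.
rewrite leqNgt; apply/negP => lt12.
by apply: (first2 t1 lt12); apply: obsmx_full_rank_mono full1.
Qed.
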